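(* Let $k>500$ and $\ln^3k/\sqrt k<\delta<1/100$, let $d=300\lceil\ln k\rceil$ and $\varepsilon=50\delta/\lceil\ln k\rceil$, and let $c^1,\dots,c^k$ be sampled independently and uniformly from the grid $G=\{0,\varepsilon,2\varepsilon,\dots\}^d\cap[0,1]^d$. Then with probability at least $1-1/k^2$, $\|c^i-c^j\|_2\ge\sqrt d/5$ for all $i\ne j$.
   Context: $G$ is the set of points of $[0,1]^d$ all of whose coordinates are nonnegative integer multiples of $\varepsilon$. *)

From HB Require Import structures.
From mathcomp Require Import all_boot all_order all_algebra.
From mathcomp Require Import all_classical all_reals all_analysis.
Set Implicit Arguments. Unset Strict Implicit. Unset Printing Implicit Defensive.
Import Order.TTheory GRing.Theory Num.Theory.
Local Open Scope ring_scope.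

(* Ambient bound on integer multipliers: any t with t * eps <= 1 satisfies
   t <= 1/eps < M, so indices 'I_M cover all grid coordinates. *)
Definition grid_bound (R : realType) (eps : R) : nat := (Num.trunc eps^-1).+2.

(* A grid point is encoded by its integer multipliers t : 'I_d -> 'I_M;
   the actual point is (t_1 eps, ..., t_d eps). *)
Definition grid_idx (R : realType) (d : nat) (eps : R) :=
  {ffun 'I_d -> 'I_(grid_bound eps)}.

Definition grid_point (R : realType) (d : nat) (eps : R) (t : grid_idx d eps)
  : 'I_d -> R := fun l => (t l : nat)%:R * eps.

Definition grid (R : realType) (d : nat) (eps : R) : {set grid_idx d eps} :=
  [set t | [forall l, 0 <= grid_point t l <= 1]].

Definition dist2 (R : realType) (d : nat) (x y : 'I_d -> R) : R :=
  Num.sqrt (\sum_(l < d) (x l - y l) ^+ 2).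

(* Probability, for k independent uniform samples from G, that all pairwise
   distances of distinct samples are >= r: (#good k-tuples in G^k) / #G^k. *)
Definition prob_sep (R : realType) (d : nat) (eps : R) (k : nat) (r : R) : R :=
  (#|[set c : {ffun 'I_k -> grid_idx d eps} |
       [forall i, c i \in grid d eps] &&
       [forall i, forall j, (i != j) ==>
          (r <= dist2 (grid_point (c i)) (grid_point (c j)))]]|)%:R
  / (#|grid d eps| ^ k)%:R.

From HB Require Import structures.
From mathcomp Require Import all_boot all_order all_algebra.
From mathcomp Require Import all_classical all_reals all_analysis.
From mathcomp Require Import ring lra.
Set Implicit Arguments. Unset Strict Implicit. Unset Printing Implicit Defensive.
Import Order.TTheory GRing.Theory Num.Theory.
Local Open Scope ring_scope.

(* Fix a grid point x and put w_l = (x_l - y_l)^2, which lies in [0, 1].  By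
   convexity of exp, 2^(-w) <= 1 - w/2, so every y with |x - y|^2 < d/25 = 12L
   satisfies 1 <= 2^(12L) prod_l (1 - w_l/2).  Summed over all y in G the
   product factorises over the coordinates.  For every a, the squares
   (a - s eps)^2 summed over the #S grid values s eps in [0, 1] add up to at
   least #S (1 - eps^2)/12, so each coordinate sum is at most
   #S (1 - (1 - eps^2)/24).  Hence at most a fraction
   rho = 2^(12L) (1 - (1 - eps^2)/24)^(300L) of G lies near x; a union bound
   over the k^2 ordered pairs leaves at least a fraction 1 - k^2 rho of the
   k-tuples separated, and k^4 rho <= 1 as soon as L >= ln k and eps <= 1/12. *)

Section PairwiseSeparation.

Variables (T : finType) (G : {set T}) (Q : rel T) (k : nat).

Definition tuples_in := [set c : {ffun 'I_k -> T} | [forall l, c l \in G]].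

Definition bad_pair (i j : 'I_k) : {set {ffun 'I_k -> T}} :=
  [set c in tuples_in | ~~ Q (c i) (c j)].

Lemma card_tuples_in : #|tuples_in| = (#|G| ^ k)%N.
Proof.
rewrite -[k in (_ ^ k)%N](card_ord k) -card_ffun_on.
by apply: eq_card => c; rewrite inE; apply/forallP/ffun_onP.
Qed.

Lemma card_bad_pair (i j : 'I_k) : i != j ->
  #|bad_pair i j| =
  (\sum_(x in G) #|[set y in G | ~~ Q x y]| * \prod_(l | (l != i) && (l != j)) #|G|)%N.
Proof.
move=> neq_ij.
rewrite -sum1_card (partition_big (fun c : {ffun 'I_k -> T} => c i) (fun x => x \in G)) /=;
  last by move=> c; rewrite /bad_pair !inE => /andP[/forallP inG _]; exact: inG.
apply: eq_bigr => x Gx.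
pose F l := if l == i then [set x] else if l == j then [set y in G | ~~ Q x y] else G.
have -> : \sum_(c in bad_pair i j | c i == x) 1 = #|setXn F|.
  rewrite sum1_card; apply: eq_card => c; rewrite unfold_in /= /bad_pair in_setXn !inE /F.
  apply/andP/forallP => [[/andP[/forallP inG badc] /eqP cix] l|Fc].
    case: eqP => [->|_]; first by rewrite inE cix.
    case: eqP => [->|_]; last exact: inG.
    by rewrite inE -cix badc (inG j).
  have := Fc i; rewrite eqxx inE => /eqP cix.
  have := Fc j; rewrite eq_sym (negbTE neq_ij) eqxx inE cix => /andP[_ ->].
  split=> //; rewrite andbT; apply/forallP => l; have := Fc l.
  by case: eqP => [->|_]; [rewrite cix | case: eqP => [->|//]; rewrite inE => /andP[]].
rewrite cardsXn (bigD1 i) //= (bigD1 j) 1?eq_sym //=.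
rewrite /F eqxx eq_sym (negbTE neq_ij) eqxx cards1 mul1n.
congr (_ * _)%N; apply: eq_bigr => l /andP[/negbTE -> /negbTE ->] //.
Qed.

Variable R : realDomainType.

Lemma card_bad_pair_le (rho : R) (i j : 'I_k) : i != j ->
  (forall x, x \in G -> #|[set y in G | ~~ Q x y]|%:R <= rho * #|G|%:R) ->
  #|bad_pair i j|%:R <= rho * (#|G| ^ k)%:R.
Proof.
move=> neq_ij badx; pose P := (\prod_(l | (l != i) && (l != j)) #|G|)%N.
have -> : (#|G| ^ k)%N = (#|G| * #|G| * P)%N.
  by rewrite -[in LHS](card_ord k) -prod_nat_const (bigD1 i) //= (bigD1 j) 1?eq_sym //= mulnA.
have -> : rho * (#|G| * #|G| * P)%:R = \sum_(x in G) rho * #|G|%:R * P%:R.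
  by rewrite sumr_const -mulr_natr !natrM; ring.
rewrite card_bad_pair // natr_sum; apply: ler_sum => x Gx.
by rewrite natrM ler_wpM2r ?badx.
Qed.

Lemma card_separated_tuples_ge (rho : R) : 0 <= rho ->
  (forall x, x \in G -> #|[set y in G | ~~ Q x y]|%:R <= rho * #|G|%:R) ->
  (1 - k%:R ^+ 2 * rho) * (#|G| ^ k)%:R <=
  #|[set c : {ffun 'I_k -> T} | [forall i, c i \in G] &&
      [forall i, forall j, (i != j) ==> Q (c i) (c j)]]|%:R.
Proof.
move=> rho_ge0 badx; set good := [set c | _].
have good_sub : good \subset tuples_in by apply/fintype.subsetP => c; rewrite !inE => /andP[].
have rest_sub : tuples_in :\: good \subset \bigcup_(p | p.1 != p.2) bad_pair p.1 p.2.
  apply/fintype.subsetP => c; rewrite !inE negb_and => /andP[/orP[/negP//|]].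
  move=> /forallPn[i /forallPn[j]]; rewrite negb_imply => /andP[neq_ij badc] inG.
  by apply/bigcupP; exists (i, j) => //; rewrite !inE inG.
have card_rest : #|tuples_in :\: good|%:R <= k%:R ^+ 2 * rho * (#|G| ^ k)%:R :> R.
  apply: le_trans (_ : (\sum_(p | p.1 != p.2) #|bad_pair p.1 p.2|)%:R <= _).
    rewrite ler_nat (leq_trans (subset_leq_card rest_sub)) //.
    elim/big_ind2: _ => [|m A n B Am Bn|//]; first by rewrite cards0.
    by rewrite (leq_trans (leq_card_setU _ _)) // leq_add.
  rewrite natr_sum (le_trans (ler_sum _ (fun p neq_p => card_bad_pair_le neq_p badx))) //.
  rewrite (le_trans (_ : _ <= \sum_(p : 'I_k * 'I_k) rho * (#|G| ^ k)%:R)) //.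
    by rewrite [leRHS](bigID (fun p => p.1 != p.2)) lerDl sumr_ge0 // => p _; rewrite mulr_ge0.
  by rewrite sumr_const card_prod card_ord -[_ *+ (k * k)]mulr_natl natrM -expr2 mulrA.
have := cardsID good tuples_in; rewrite (finset.setIidPr good_sub) card_tuples_in => card_split.
have -> : #|good|%:R = (#|G| ^ k)%:R - #|tuples_in :\: good|%:R :> R.
  by rewrite -card_split natrD addrK.
by rewrite mulrBl mul1r lerD2l lerN2.
Qed.

End PairwiseSeparation.

Lemma sum_sq_shift (R : numFieldType) (a e : R) (m : nat) :
  \sum_(t < m) (a - t%:R * e) ^+ 2 =
  m%:R * (a - e * (m%:R - 1) / 2) ^+ 2 + e ^+ 2 * m%:R * (m%:R ^+ 2 - 1) / 12.
Proof.
elim: m => [|m IHm]; first by rewrite big_ord0 !mul0r mulr0 !mul0r add0r.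
by rewrite big_ord_recr /= IHm -addn1 natrD; field.
Qed.

Lemma sum_sq_shift_ge (R : realFieldType) (a e : R) (m : nat) : 1 <= m%:R * e ->
  m%:R * (1 - e ^+ 2) / 12 <= \sum_(t < m) (a - t%:R * e) ^+ 2.
Proof.
move=> me_ge1; rewrite sum_sq_shift.
have m_ge0 : 0 <= m%:R :> R by [].
have : 0 <= m%:R * (a - e * (m%:R - 1) / 2) ^+ 2 by apply: mulr_ge0; rewrite ?sqr_ge0.
have : 0 <= m%:R * ((m%:R * e) ^+ 2 - 1) by rewrite mulr_ge0 // subr_ge0 exprn_ege1.
nra.
Qed.

Lemma expR_convex_le (R : realType) (c w : R) : 0 <= w -> w <= 1 ->
  expR (- c * w) <= 1 - (1 - expR (- c)) * w.
Proof.
move=> w_ge0 w_le1; have := convex_expR (Itv01 w_ge0 w_le1) (- c) 0.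
by rewrite !convRE /= expR0 /unstable.onem mulr0 addr0 mulrC => /le_trans; apply; lra.
Qed.

Lemma expR_ln2_le (R : realType) (w : R) : 0 <= w -> w <= 1 ->
  expR (- ln 2 * w) <= 1 - w / 2.
Proof.
move=> w_ge0 w_le1; apply: le_trans (expR_convex_le (ln 2) w_ge0 w_le1) _.
by rewrite expRN lnK ?posrE //; lra.
Qed.

Lemma expR_ln2_sum_le_prod (R : realType) (I : finType) (w : I -> R) :
  (forall l, 0 <= w l <= 1) ->
  expR (- ln 2 * \sum_l w l) <= \prod_l (1 - w l / 2).
Proof.
move=> w01; rewrite mulr_sumr expR_sum; apply: ler_prod => l _.
by have /andP[w_ge0 w_le1] := w01 l; rewrite expR_ge0 expR_ln2_le.
Qed.

Lemma pow2_prod_half_ge1 (R : realType) (I : finType) (w : I -> R) (n : nat) :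
  (forall l, 0 <= w l <= 1) -> \sum_l w l < n%:R ->
  1 <= 2 ^+ n * \prod_l (1 - w l / 2).
Proof.
move=> w01 sum_lt; have pow2_gt0 : (0 : R) < 2 ^+ n by rewrite exprn_gt0.
have pow2E : expR (- ln 2 * n%:R) = (2 ^+ n)^-1 :> R.
  by rewrite mulNr expRN expRM_natr lnK ?posrE.
rewrite -[leLHS](mulfV (lt0r_neq0 pow2_gt0)) ler_pM2l // -pow2E.
apply: le_trans (expR_ln2_sum_le_prod w01); rewrite ler_expR !mulNr lerN2 ler_pM2l ?ltW //.
by rewrite ln_gt0 // ltr1n.
Qed.

Lemma card_low_weight_le (R : realType) (I T : finType) (S : {pred T})
    (w : I -> T -> R) (n : nat) :
  (forall l s, s \in S -> 0 <= w l s <= 1) ->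
  #|[set y : {ffun I -> T} | [forall l, y l \in S] && (\sum_l w l (y l) < n%:R)]|%:R
  <= 2 ^+ n * \prod_l \sum_(s in S) (1 - w l s / 2).
Proof.
move=> w01; set low := [set y | _].
have prod_ge0 y : [forall l, y l \in S] -> 0 <= \prod_l (1 - w l (y l) / 2).
  move=> /forallP Sy; apply: prodr_ge0 => l _.
  by have /andP[_ w_le1] := w01 l _ (Sy l); lra.
rewrite bigA_distr_big_dep mulr_sumr -sum1_card natr_sum.
rewrite [leRHS](bigID (mem low)) /= -[leLHS]addr0 lerD //; last first.
  by apply: sumr_ge0 => y /andP[/forallP Sy _]; rewrite mulr_ge0 ?prod_ge0 //; exact/forallP.
rewrite [leRHS](eq_bigl (mem low)); last first.
  by move=> y; rewrite !inE andb_idl // => /andP[/forallP Sy _]; apply/familyP.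
apply: ler_sum => y; rewrite inE => /andP[/forallP Sy low_y].
by apply: pow2_prod_half_ge1 low_y => l; exact: w01.
Qed.

Lemma sqr_sub_le1 (R : realDomainType) (u v : R) :
  0 <= u <= 1 -> 0 <= v <= 1 -> (u - v) ^+ 2 <= 1.
Proof.
move=> /andP[u_ge0 u_le1] /andP[v_ge0 v_le1].
have : 0 <= (1 - (u - v)) * (1 + (u - v)) by apply: mulr_ge0; lra.
nra.
Qed.

Lemma dist2_lt_sqrt_div (R : realType) d (x y : 'I_d -> R) (a b : R) : 0 < b ->
  dist2 x y < Num.sqrt a / b -> \sum_l (x l - y l) ^+ 2 < a / b ^+ 2.
Proof.
move=> b_gt0; rewrite /dist2 => dist_lt.
have sum_ge0 : 0 <= \sum_l (x l - y l) ^+ 2 by apply: sumr_ge0 => l _; apply: sqr_ge0.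
have a_gt0 : 0 < a.
  have binv_gt0 : 0 < b^-1 by rewrite invr_gt0.
  rewrite -sqrtr_gt0 -(pmulr_lgt0 _ binv_gt0).
  exact: le_lt_trans (sqrtr_ge0 _) dist_lt.
rewrite -(sqr_sqrtr sum_ge0) -(sqr_sqrtr (ltW a_gt0)) -expr_div_n.
by rewrite ltr_pXn2r // nnegrE ?sqrtr_ge0 // divr_ge0 ?sqrtr_ge0 ?ltW.
Qed.

Definition near_fraction (R : realType) (eps : R) (n d : nat) : R :=
  2 ^+ n * (1 - (1 - eps ^+ 2) / 24) ^+ d.

Lemma near_fraction_ge0 (R : realType) (eps : R) n d : 0 <= near_fraction eps n d.
Proof. by rewrite mulr_ge0 ?exprn_ge0 //; nra. Qed.

Section Grid.

Variables (R : realType) (eps : R).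
Hypothesis eps_gt0 : 0 < eps.

Definition grid_coord : {pred 'I_(grid_bound eps)} :=
  [pred s : 'I_(grid_bound eps) | 0 <= (s : nat)%:R * eps <= 1].

Lemma in_grid d (t : grid_idx d eps) : (t \in grid d eps) = [forall l, t l \in grid_coord].
Proof. by rewrite inE. Qed.

Lemma card_grid d : #|grid d eps| = (#|grid_coord| ^ d)%N.
Proof.
rewrite -[d in RHS](card_ord d) -card_ffun_on.
by apply: eq_card => t; rewrite in_grid; apply/forallP/ffun_onP.
Qed.

Lemma big_grid_coord (A : Type) (idx : A) (op : A -> A -> A) (F : nat -> A) :
  \big[op/idx]_(s in grid_coord) F s = \big[op/idx]_(s < (Num.truncn eps^-1).+1) F s.
Proof.
rewrite (big_ord_widen (grid_bound eps) F) //; apply: eq_bigl => s.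
rewrite /grid_coord inE; move: (nat_of_ord s) => n.
rewrite ltnS truncn_ge_nat; last by rewrite invr_ge0 ltW.
rewrite mulr_ge0 ?ler0n ?(ltW eps_gt0) //=.
by rewrite -div1r ler_pdivlMr.
Qed.

Lemma card_grid_coord : #|grid_coord| = (Num.truncn eps^-1).+1.
Proof. by rewrite -sum1_card (big_grid_coord _ _ (fun => 1%N)) sum1_card card_ord. Qed.

Lemma grid_coord_span : 1 <= (Num.truncn eps^-1).+1%:R * eps.
Proof.
have inv_ge0 : 0 <= eps^-1 by rewrite invr_ge0 ltW.
have /andP[_ /ltW inv_le] := truncn_itv inv_ge0.
by rewrite -[leLHS](mulVf (lt0r_neq0 eps_gt0)) ler_pM2r.
Qed.

Lemma sum_grid_coord_le (a : R) :
  \sum_(s in grid_coord) (1 - (a - (s : nat)%:R * eps) ^+ 2 / 2)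
  <= #|grid_coord|%:R * (1 - (1 - eps ^+ 2) / 24).
Proof.
rewrite card_grid_coord (big_grid_coord _ _ (fun n => 1 - (a - n%:R * eps) ^+ 2 / 2)).
rewrite sumrB sumr_const card_ord -mulr_suml.
have := sum_sq_shift_ge a grid_coord_span; lra.
Qed.

Lemma card_grid_near_le d (x : grid_idx d eps) (n : nat) : x \in grid d eps ->
  #|[set y in grid d eps | \sum_l (grid_point x l - grid_point y l) ^+ 2 < n%:R]|%:R
  <= near_fraction eps n d * #|grid d eps|%:R.
Proof.
rewrite inE => /forallP x01.
pose w l (s : 'I_(grid_bound eps)) := (grid_point x l - (s : nat)%:R * eps) ^+ 2.
have w01 l s : s \in grid_coord -> 0 <= w l s <= 1.
  by move=> s_in; rewrite sqr_ge0 (sqr_sub_le1 (x01 l) s_in).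
have -> : [set y in grid d eps | \sum_l (grid_point x l - grid_point y l) ^+ 2 < n%:R] =
          [set y : grid_idx d eps | [forall l, y l \in grid_coord] && (\sum_l w l (y l) < n%:R)].
  by apply/setP => y; rewrite !inE.
apply: le_trans (card_low_weight_le n w01) _.
rewrite card_grid natrX -mulrA ler_wpM2l ?exprn_ge0 //.
rewrite -exprMn mulrC -[d in _ ^+ d](card_ord d) -prodr_const.
apply: ler_prod => l _; rewrite sum_grid_coord_le andbT.
apply: sumr_ge0 => s s_in; have /andP[_ w_le1] := w01 l s s_in.
rewrite subr_ge0 ler_pdivrMr //; lra.
Qed.

Lemma card_grid_far_le d n : (d <= 25 * n)%N ->
  forall x : grid_idx d eps, x \in grid d eps ->
  #|[set y in grid d eps |
     ~~ (Num.sqrt d%:R / 5 <= dist2 (grid_point x) (grid_point y))]|%:R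
  <= near_fraction eps n d * #|grid d eps|%:R.
Proof.
move=> d_le x x_in; apply: le_trans (card_grid_near_le n x_in).
rewrite ler_nat subset_leq_card //; apply/fintype.subsetP => y.
rewrite !inE -ltNge => /andP[-> near_y].
have five_gt0 : 0 < 5 :> R by [].
apply: lt_le_trans (dist2_lt_sqrt_div five_gt0 near_y) _.
by rewrite ler_pdivrMr ?exprn_gt0 // -natrX -natrM ler_nat mulnC.
Qed.

End Grid.

Lemma ln_gt5 (R : realType) (k : nat) : (500 < k)%N -> 5 < ln (k%:R : R).
Proof.
move=> k_gt500; have k_gt0 : (0 < k)%N by apply: leq_ltn_trans k_gt500.
rewrite -ltr_expR lnK ?posrE ?ltr0n // (@lt_trans _ _ 500) ?ltr_nat //.
have quarter_le : expR (1 / 4) <= 4 / 3 :> R.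
  have := expR_ge1Dx (- (1 / 4) : R); rewrite expRN -[X in _ <= X]mul1r.
  by rewrite ler_pdivlMr ?expR_gt0 //; lra.
rewrite (_ : 5 = 20%:R * (1 / 4)); last by lra.
rewrite expRM_natl; apply: le_lt_trans (lerXn2r 20 _ _ quarter_le) _.
- by rewrite nnegrE expR_ge0.
- by rewrite nnegrE; lra.
- lra.
Qed.

(* The final count needs ln 2 <= 0.701, so the bound must be this sharp. *)
Lemma two_le_expR (R : realType) : 2 <= expR (7 / 10) :> R.
Proof.
rewrite (_ : 7 / 10 = 64%:R * (7 / 640)); last by lra.
rewrite expRM_natl; apply: le_trans (lerXn2r 64 _ _ (expR_ge1Dx _)).
- lra.
- by rewrite nnegrE; lra.
- by rewrite nnegrE expR_ge0.
Qed.

Lemma exprn_le_expR (R : realType) (x y : R) (n : nat) :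
  0 <= x -> x <= expR y -> x ^+ n <= expR (n%:R * y).
Proof.
by move=> x_ge0 x_le; rewrite expRM_natl lerXn2r // nnegrE (expR_ge0, x_ge0).
Qed.

Lemma k4_near_fraction_le1 (R : realType) (k L : nat) (eps : R) :
  (0 < k)%N -> ln (k%:R : R) <= L%:R -> 0 <= eps -> eps <= 1 / 12 ->
  k%:R ^+ 4 * near_fraction eps (12 * L) (300 * L) <= 1.
Proof.
move=> k_gt0 ln_k_le eps_ge0 eps_le.
have k_le : k%:R <= expR L%:R :> R by rewrite -[leLHS]lnK ?posrE ?ltr0n // ler_expR.
have c_le : 1 - (1 - eps ^+ 2) / 24 <= expR (- ((1 - eps ^+ 2) / 24)).
  by rewrite (le_trans _ (expR_ge1Dx _)) // addrC.
have c_ge0 : 0 <= 1 - (1 - eps ^+ 2) / 24 by nra.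
have k4_le := exprn_le_expR 4 (ler0n _ k) k_le.
have two_le := exprn_le_expR (12 * L) (ler0n _ 2) (two_le_expR R).
have c_pow_le := exprn_le_expR (300 * L) c_ge0 c_le.
rewrite /near_fraction -[leRHS]expR0.
apply: le_trans (ler_pM _ _ k4_le (ler_pM _ _ two_le c_pow_le)) _;
  rewrite ?mulr_ge0 ?exprn_ge0 //.
rewrite -!expRD ler_expR !natrM.
have : eps ^+ 2 <= 1 / 144 by nra.
have : 0 <= L%:R :> R by [].
nra.
Qed.

Theorem lemma8 (R : realType) (k : nat) (delta : R) :
  (500 < k)%N ->
  (ln (k%:R : R)) ^+ 3 / Num.sqrt (k%:R) < delta ->
  delta < 1 / 100 ->
  let L : nat := `|Num.ceil (ln (k%:R : R))|%N in
  let d : nat := (300 * L)%N in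
  let eps : R := 50 * delta / L%:R in
  1 - 1 / (k%:R ^+ 2) <= prob_sep d eps k (Num.sqrt (d%:R) / 5).
Proof.
move=> k_gt500 delta_gt delta_lt; cbv zeta.
set L := `|Num.ceil (ln (k%:R : R))|%N; set d := (300 * L)%N; set eps := 50 * delta / L%:R.
have k_gt0 : (0 < k)%N by apply: leq_ltn_trans k_gt500.
have ln_k_gt5 := ln_gt5 R k_gt500.
have ln_k_le : ln (k%:R : R) <= L%:R.
  by rewrite natr_absz ger0_norm ?ceil_ge // ceil_ge0; lra.
have L_ge6 : 6 <= L%:R :> R by rewrite (ler_nat _ 6) -(ltr_nat R); lra.
have delta_gt0 : 0 < delta.
  apply: le_lt_trans delta_gt; rewrite divr_ge0 ?sqrtr_ge0 // exprn_ge0 //; lra.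
have eps_gt0 : 0 < eps by rewrite divr_gt0 //; lra.
have eps_le : eps <= 1 / 12 by rewrite /eps ler_pdivrMr; lra.
have N_gt0 : 0 < (#|grid d eps| ^ k)%:R :> R.
  by rewrite ltr0n expn_gt0 card_grid expn_gt0 (card_grid_coord eps_gt0).
pose far : rel (grid_idx d eps) :=
  fun x y => Num.sqrt d%:R / 5 <= dist2 (grid_point x) (grid_point y).
have d_le : (d <= 25 * (12 * L))%N by rewrite mulnA.
rewrite /prob_sep ler_pdivlMr //.
apply: le_trans (card_separated_tuples_ge (Q := far) k (near_fraction_ge0 _ _ _)
                   (card_grid_far_le eps_gt0 d_le)).
rewrite ler_pM2r // lerD2l lerN2 ler_pdivlMr ?exprn_gt0 ?ltr0n // mulrAC -exprD.
exact: k4_near_fraction_le1 k_gt0 ln_k_le (ltW eps_gt0) eps_le.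
Qed.
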